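(* Let $\mathcal I\subseteq\mathcal P(\mathbb R)$ be a proper, translation-invariant $\sigma$-ideal containing all singletons and having a Borel base, and assume that $\mathcal I$ has the Steinhaus property and $\operatorname{non}(\mathcal I)<\mathfrak c$. Then there exists a set $C\subseteq\mathbb R$ which is a ${<}\mathfrak c$-covering and is completely $\mathcal I$-nonmeasurable.
   Context: $\mathfrak c=|\mathbb R|$. Borel base: every $A\in\mathcal I$ is contained in a Borel set in $\mathcal I$. $\operatorname{non}(\mathcal I)=\min\{|A|:A\subseteq\mathbb R,\ A\notin\mathcal I\}$. Steinhaus property: for all Borel $A,B\notin\mathcal I$ there is a nonempty open $U\subseteq A-B$. A set $N$ is completely $\mathcal I$-nonmeasurable if for every Borel $A\notin\mathcal I$, both $A\cap N\notin\mathcal I$ and $A\setminus N\notin\mathcal I$. A set $C$ is a ${<}\mathfrak c$-covering if for every $B\subseteq\mathbb R$ with $|B|<\mathfrak c$ there is $x\in\mathbb R$ with $B+x\subseteq C$. *)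

From mathcomp Require Import all_boot all_order all_algebra.
From mathcomp Require Import all_classical all_reals all_analysis.
Import Order.TTheory GRing.Theory Num.Theory numFieldNormedType.Exports.
Local Open Scope classical_set_scope.
Local Open Scope ring_scope.

Set Implicit Arguments.
Unset Strict Implicit.
Section Defs.
Variable R : realType.

Definition Borel (A : set R) : Prop := <<s [set U : set R | open U] >> A.

Definition translate (A : set R) (x : R) : set R := [set a + x | a in A].

Definition setdiff_alg (A B : set R) : set R := [set a - b | a in A & b in B].

Definition sigma_ideal (I : set (set R)) : Prop :=
  I set0 /\
  (forall A B : set R, A `<=` B -> I B -> I A) /\
  (forall F : nat -> set R, (forall n, I (F n)) -> I (\bigcup_n F n)).

Definition proper_sigma_ideal (I : set (set R)) : Prop := ~ I [set: R].

Definition translation_invariant (I : set (set R)) : Prop :=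
  forall (A : set R) (x : R), I A -> I (translate A x).

Definition contains_singletons (I : set (set R)) : Prop :=
  forall x : R, I [set x].

Definition has_Borel_base (I : set (set R)) : Prop :=
  forall A : set R, I A -> exists B : set R, [/\ Borel B, I B & A `<=` B].

Definition card_lt_c (A : set R) : Prop :=
  (A #<= [set: R])%card /\ ~ ([set: R] #<= A)%card.

Definition non_lt_c (I : set (set R)) : Prop :=
  exists A : set R, card_lt_c A /\ ~ I A.

Definition Steinhaus (I : set (set R)) : Prop :=
  forall A B : set R, Borel A -> Borel B -> ~ I A -> ~ I B ->
    exists U : set R, [/\ open U, U !=set0 & U `<=` setdiff_alg A B].

Definition completely_nonmeasurable (I : set (set R)) (N : set R) : Prop :=
  forall A : set R, Borel A -> ~ I A -> ~ I (A `&` N) /\ ~ I (A `\` N).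

Definition lt_c_covering (C : set R) : Prop :=
  forall B : set R, card_lt_c B -> exists x : R, translate B x `<=` C.

End Defs.

From mathcomp Require Import all_boot all_order all_algebra.
From mathcomp Require Import all_classical all_reals all_analysis.
Import Order.TTheory GRing.Theory Num.Theory numFieldNormedType.Exports.
Local Open Scope classical_set_scope.
Local Open Scope card_scope.
Local Open Scope ring_scope.
Set Implicit Arguments.
Unset Strict Implicit.
Unset Printing Implicit Defensive.

(* Take X outside I with |X| < c and let Y = X + Q. For a Borel set A outside
   I, the Steinhaus property makes the complement of A + Q belong to I (an open
   set inside (A + Q) - complement would contain a rational), so some rational
   translate of X meets A outside I, and hence so does Y. Since |Y - Y| < c,
   some t lies outside Y - Y; then Y and D = Y + t are disjoint and both meet
   every Borel set outside I outside I, so C = R \ D is completely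
   I-nonmeasurable. As |D| < c, for |B| < c the set D - B misses some x, and
   B + x lies in C. The cardinal arithmetic needed for "|A|, |B| < c implies
   |A - B| < c" is Hessenberg's |A * A| = |A| for infinite A, proved by Zorn's
   lemma on partial bijections S * S -> S. *)

Lemma pcard_le_injP T (U : pointedType) (A : set T) (B : set U) :
  A #<= B <-> exists f : T -> U,
    (forall x, A x -> B (f x)) /\ (forall x y, A x -> A y -> f x = f y -> x = y).
Proof.
split=> [/pcard_leP/injfunPex[f fAB fi]|[f [fAB fi]]].
  by exists f; split=> // x y Ax Ay; apply: fi; rewrite inE.
by apply/pcard_leP/injfunPex; exists f => // x y; rewrite !inE; exact: fi.
Qed.

Lemma bigcup_chain2 T (F : set (set T)) z z' : total_on F subset ->
  (\bigcup_(G in F) G) z -> (\bigcup_(G in F) G) z' ->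
  exists2 G, F G & G z /\ G z'.
Proof.
move=> Ftot [G FG Gz] [G' FG' Gz'].
by case: (Ftot G G' FG FG') => sub; [exists G'|exists G] => //; split=> //; exact: sub.
Qed.

Lemma card_le_total (T U : pointedType) (A : set T) (B : set U) :
  A #<= B \/ B #<= A.
Proof.
pose P := [set G : set (T * U) | [/\ G `<=` A `*` B,
  forall x y y', G (x, y) -> G (x, y') -> y = y' &
  forall x x' y, G (x, y) -> G (x', y) -> x = x']].
have [M [[MAB Mfun Minj] Mmax]] : exists M, P M /\ forall G, M `<` G -> ~ P G.
  apply: Zorn_bigcup => F FP Ftot; split.
  - by move=> z [G /FP[+ _ _]]; apply.
  - move=> x y y' /(bigcup_chain2 Ftot)/[apply] -[G /FP[_ Gfun _] [Gy Gy']].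
    exact: Gfun Gy Gy'.
  - move=> x x' y /(bigcup_chain2 Ftot)/[apply] -[G /FP[_ _ Ginj] [Gx Gx']].
    exact: Ginj Gx Gx'.
have [Adom|/existsNP[x0 /not_implyP[Ax0 x0_free]]] :=
  EM (forall x, A x -> exists y, M (x, y)).
  left; apply/pcard_le_injP.
  have /choice[f fP] : forall x, exists y, A x -> M (x, y).
    by move=> x; have [/Adom[y]|nAx] := EM (A x); [exists y|exists point].
  exists f; split=> [x /fP/MAB[]//|x x' /fP Mx /fP Mx' fxx'].
  by apply: Minj Mx _; rewrite fxx'.
have [Bran|/existsNP[y0 /not_implyP[By0 y0_free]]] :=
  EM (forall y, B y -> exists x, M (x, y)).
  right; apply/pcard_le_injP.
  have /choice[g gP] : forall y, exists x, B y -> M (x, y).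
    by move=> y; have [/Bran[x]|nBy] := EM (B y); [exists x|exists point].
  exists g; split=> [y /gP/MAB[]//|y y' /gP My /gP My' gyy'].
  by apply: Mfun My _; rewrite gyy'.
exfalso; apply: (Mmax (M `|` [set (x0, y0)])).
  split=> [z Mz|/(_ (x0, y0) (or_intror erefl)) Mxy]; first by left.
  by apply: x0_free; exists y0.
split=> [z [/MAB//|->//]|x y y'|x x' y].
- move=> [Mxy|/pair_equal_spec[-> ->]] [Mxy'|/pair_equal_spec[ex ->]] //.
  + exact: Mfun Mxy Mxy'.
  + by exfalso; apply: x0_free; exists y; rewrite -ex.
  + by exfalso; apply: x0_free; exists y'.
- move=> [Mxy|/pair_equal_spec[-> ->]] [Mxy'|/pair_equal_spec[-> ey]] //.
  + exact: Minj Mxy Mxy'.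
  + by exfalso; apply: y0_free; exists x; rewrite -ey.
  + by exfalso; apply: y0_free; exists x'.
Qed.

Lemma card_setX_le (T U : pointedType) (A : set T) (B : set U) :
  A #<= B -> A `*` A #<= B `*` B.
Proof.
move=> /pcard_le_injP[f [fAB finj]]; apply/pcard_le_injP.
exists (fun z => (f z.1, f z.2)); split=> [[a b] [/= Aa Ab]|]; first by split; apply: fAB.
move=> [a b] [a' b'] [/= Aa Ab] [/= Aa' Ab'] /pair_equal_spec[faa' fbb'].
by rewrite (finj a a') // (finj b b').
Qed.

Section SquareGraph.
Variable T : pointedType.
Implicit Types (G : set ((T * T) * T)) (A B S : set T).

Lemma card_setU_le S B :
  infinite_set S -> S `*` S #<= S -> B #<= S -> S `|` B #<= S.
Proof.
move=> /infiniteP/pcard_le_injP[e [eS einj]].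
move=> /pcard_le_injP[m [mS minj]] /pcard_le_injP[g [gS ginj]].
have e01 : e 0%N <> e 1%N by move=> /einj => /(_ I I).
pose f x := if `[< S x >] then m (x, e 0%N) else m (g x, e 1%N).
apply/pcard_le_injP; exists f; split=> [x Hx|x y Hx Hy].
  by rewrite /f; case: asboolP => [Sx|nSx]; apply: mS; split=> //=;
    [exact: eS|apply: gS; case: Hx|exact: eS].
have [Bx By] : (~ S x -> B x) /\ (~ S y -> B y) by split=> ?; [case: Hx|case: Hy].
rewrite /f; case: asboolP => Sx; case: asboolP => Sy /minj.
- by move=> /(_ (conj Sx (eS _ I)) (conj Sy (eS _ I))) [].
- by move=> /(_ (conj Sx (eS _ I)) (conj (gS _ (By Sy)) (eS _ I))) [_ /e01].
- by move=> /(_ (conj (gS _ (Bx Sx)) (eS _ I)) (conj Sy (eS _ I))) [_ /esym/e01].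
- move=> /(_ (conj (gS _ (Bx Sx)) (eS _ I)) (conj (gS _ (By Sy)) (eS _ I))) [].
  by move=> /ginj; apply; [exact: Bx|exact: By].
Qed.

Definition codomg G : set T := [set c | exists k, G (k, c)].

(* Graphs of bijections S * S -> S, with S = codomg G; using graphs makes
   extension of such bijections set inclusion, as Zorn's lemma requires. *)
Definition square_bijgraph G :=
  [/\ forall a b c, G ((a, b), c) -> codomg G a /\ codomg G b,
      forall k c c', G (k, c) -> G (k, c') -> c = c',
      forall k k' c, G (k, c) -> G (k', c) -> k = k' &
      forall a b, codomg G a -> codomg G b -> exists c, G ((a, b), c)].

Lemma codomg_sub G G' : G `<=` G' -> codomg G `<=` codomg G'.
Proof. by move=> GG' c [k /GG' G'kc]; exists k. Qed.

Lemma square_bijgraph_card G :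
  square_bijgraph G -> codomg G `*` codomg G #<= codomg G.
Proof.
move=> [_ _ Ginj Gtot]; apply/pcard_le_injP.
have /choice[m mG] : forall k : T * T,
    exists c, codomg G k.1 -> codomg G k.2 -> G (k, c).
  move=> [a b]; have [[Sa Sb]|nS] := EM (codomg G a /\ codomg G b).
    by have [c Gc] := Gtot a b Sa Sb; exists c.
  by exists point => Sa Sb; case: nS.
exists m; split=> [[a b] [Sa Sb]|k k' [Sk1 Sk2] [Sk1' Sk2'] mkk'].
  by exists (a, b); exact: mG.
by apply: (Ginj _ _ (m k)); [exact: mG|rewrite mkk'; exact: mG].
Qed.

Lemma square_bijgraph_bigcup (F : set (set ((T * T) * T))) :
  F `<=` square_bijgraph -> total_on F subset ->
  square_bijgraph (\bigcup_(G in F) G).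
Proof.
move=> FP Ftot; have FU G : F G -> G `<=` \bigcup_(G in F) G by move=> FG z Gz; exists G.
split.
- move=> a b c [G FG Gabc]; have [Gdom _ _ _] := FP G FG.
  by have [Sa Sb] := Gdom _ _ _ Gabc; split; apply: codomg_sub (FU G FG) _ _.
- move=> k c c' /(bigcup_chain2 Ftot)/[apply] -[G /FP[_ Gfun _ _] [Gc Gc']].
  exact: Gfun Gc Gc'.
- move=> k k' c /(bigcup_chain2 Ftot)/[apply] -[G /FP[_ _ Ginj _] [Gk Gk']].
  exact: Ginj Gk Gk'.
- move=> a b [k Uka] [k' Ukb].
  have [G FG [Gka Gkb]] := bigcup_chain2 Ftot Uka Ukb.
  have [_ _ _ Gtot] := FP G FG.
  have [c Gc] := Gtot a b (ex_intro _ k Gka) (ex_intro _ k' Gkb).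
  by exists c; exists G.
Qed.

Lemma square_bijgraph_extend G B : square_bijgraph G -> infinite_set (codomg G) ->
  B #= codomg G -> (forall b, B b -> ~ codomg G b) ->
  exists2 G', square_bijgraph G' & G `<=` G' /\ codomg G' = codomg G `|` B.
Proof.
move=> Gsq Sinf /card_eqPle[BS SB] BnS.
have [Gdom Gfun Ginj Gtot] := Gsq; set S := codomg G in Sinf SB BS BnS Gdom Gtot *.
have GS q c : G (q, c) -> S q.1 /\ S q.2 by case: q => a b /Gdom.
(* The new pairs E are as many as B, so G extends by a bijection E -> B. *)
pose E := (S `|` B) `*` (S `|` B) `\` S `*` S.
have [k [kEB kinj kBsurj]] : exists k, set_bij E B k.
  apply/card_set_bijP/Cantor_Bernstein.
    apply: card_le_trans (subset_card_le (@subDsetl _ _ _)) _.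
    apply: card_le_trans (card_setX_le (card_setU_le Sinf (square_bijgraph_card Gsq) BS)) _.
    exact: card_le_trans (square_bijgraph_card Gsq) SB.
  apply/pcard_le_injP; exists (fun b => (b, b)).
  split=> [b Bb|b b' _ _ /pair_equal_spec[]//].
  by split; [split; right|move=> [/BnS]].
pose G' := G `|` [set z | E z.1 /\ z.2 = k z.1].
have codomG' : codomg G' = S `|` B.
  apply/seteqP; split=> [c [q [Gqc|[Eq /= ->]]]|c [[q Gqc]|/kBsurj[q Eq <-]]].
  - by left; exists q.
  - by right; apply: kEB.
  - by exists q; left.
  - by exists q; right.
exists G'; last by split=> // z; left.
rewrite /square_bijgraph codomG'; split.
- by move=> a b c [/Gdom[Sa Sb]|[[[/= Ha Hb] _] _]]; first by split; left.
- move=> q c c' [Gc|[Eq /= ->]] [Gc'|[Eq' /= ->]] //; first exact: Gfun Gc Gc'.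
    by case: Eq' => _; case; apply: GS Gc.
  by case: Eq => _; case; apply: GS Gc'.
- move=> q q' c [Gc|[Eq /= ->]] [Gc'|[Eq' /= ec]].
  + exact: Ginj Gc Gc'.
  + by case: (BnS c); [rewrite ec; apply: kEB|exists q].
  + by case: (BnS (k q)); [apply: kEB|exists q'].
  + by apply: kinj; rewrite ?inE.
- move=> a b Ha Hb; have [[Sa Sb]|nSab] := EM (S a /\ S b).
    by have [c Gc] := Gtot a b Sa Sb; exists c; left.
  by exists (k (a, b)); right.
Qed.

Lemma exists_infinite_square_bijgraph A : infinite_set A ->
  exists G, [/\ square_bijgraph G, codomg G `<=` A & infinite_set (codomg G)].
Proof.
move=> /infiniteP/pcard_le_injP[e [eA einj]].
have {}einj : injective e by move=> m n; apply: einj.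
have [p [_ pinj psurj]] : exists p : nat * nat -> nat, set_bij setT setT p.
  exact/card_set_bijP/card_nat2.
pose G := [set z | exists i j, z = ((e i, e j), e (p (i, j)))].
have codomG : codomg G = range e.
  apply/seteqP; split=> [c [_ [i [j [_ ->]]]]|_ [n _ <-]]; first by exists (p (i, j)).
  by have [[i j] _ <-] := psurj n I; exists (e i, e j); exists i, j.
exists G; rewrite codomG; split; last 2 first.
- by move=> _ [n _ <-]; exact: eA.
- by apply/infiniteP; rewrite (card_le_eqr (inj_card_eq (in2W einj))).
rewrite /square_bijgraph codomG; split.
- move=> a b c [i [j /pair_equal_spec[/pair_equal_spec[-> ->] _]]].
  by split; [exists i|exists j].
- move=> q c c' [i [j /pair_equal_spec[-> ->]]].
  move=> [i' [j' /pair_equal_spec[/pair_equal_spec[/einj ei /einj ej] ->]]].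
  by rewrite ei ej.
- move=> q q' c [i [j /pair_equal_spec[-> ->]]].
  move=> [i' [j' /pair_equal_spec[-> /einj eij]]].
  suff /pair_equal_spec[-> ->] : (i, j) = (i', j') by [].
  by apply: pinj; rewrite ?in_setT.
- by move=> _ _ [i _ <-] [j _ <-]; exists (e (p (i, j))), i, j.
Qed.

Lemma card_setX_infinite A : infinite_set A -> A `*` A #<= A.
Proof.
move=> Ainf.
(* The alternative G = set0 keeps P closed under the union of the empty chain. *)
pose P := [set G | [/\ square_bijgraph G, codomg G `<=` A &
  G = set0 \/ infinite_set (codomg G)]].
have [M [[Msq MA M0inf] Mmax]] : exists M, P M /\ forall G, M `<` G -> ~ P G.
  apply: Zorn_bigcup => F FP Ftot; split.
  - by apply: square_bijgraph_bigcup => // G /FP[].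
  - by move=> c [k [G /FP[_ GA _] Gkc]]; apply: GA; exists k.
  - have [[G FG [z Gz]]|F0] := EM (exists2 G, F G & G !=set0).
      right; have [_ _ [G0|Ginf]] := FP G FG; first by rewrite G0 in Gz.
      by apply: sub_infinite_set Ginf; apply: codomg_sub => w Gw; exists G.
    left; apply/seteqP; split=> // z [G FG Gz].
    by apply: F0; exists G => //; exists z.
set S := codomg M.
have Sinf : infinite_set S.
  case: M0inf => // M0; exfalso.
  have [G0 [G0sq G0A G0inf]] := exists_infinite_square_bijgraph Ainf.
  apply: (Mmax G0); last by split=> //; right.
  have [c [q G0qc]] := infinite_setN0 G0inf.
  by rewrite M0; split=> // /(_ _ G0qc).
have [SAS|ASS] := card_le_total S (A `\` S).
  have /card_subP[B BS BAS] := SAS.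
  have [M' M'sq [MM' codomM']] :=
    square_bijgraph_extend Msq Sinf BS (fun b Bb => (BAS b Bb).2).
  have [b Bb] : B !=set0 by apply: infinite_setN0; rewrite (eq_finite_set BS).
  exfalso; apply: (Mmax M').
    split=> // M'M; have : codomg M' b by rewrite codomM'; right.
    by move=> /(codomg_sub M'M); apply: (BAS b Bb).2.
  split=> //; rewrite codomM'; last by right; apply: sub_infinite_set Sinf => x; left.
  by move=> x [/MA|/BAS[]].
have AS : A #<= S.
  apply: card_le_trans (card_setU_le Sinf (square_bijgraph_card Msq) ASS).
  by apply: subset_card_le => a Aa; have [Sa|nSa] := EM (S a); [left|right].
apply: card_le_trans (card_setX_le AS) _.
exact: card_le_trans (square_bijgraph_card Msq) (subset_card_le MA).
Qed.
End SquareGraph.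

Section SmallSets.
Variable T : pointedType.
Hypothesis T_uncountable : ~ countable [set: T].
Implicit Types A B : set T.

Definition small A := ~ ([set: T] #<= A).

Lemma infinite_setT : infinite_set [set: T].
Proof. by move=> /finite_set_countable. Qed.

Lemma small_card_le A B : A #<= B -> small B -> small A.
Proof. by move=> AB sB TA; apply: sB; exact: card_le_trans TA AB. Qed.

Lemma small_countable A : countable A -> small A.
Proof. by move=> Acount TA; apply: T_uncountable; exact: card_le_trans TA Acount. Qed.

Lemma small_neq_setT A : small A -> exists t, ~ A t.
Proof.
move=> sA; apply: contra_notP sA => /forallNP allA.
by apply: subset_card_le => t _; apply: contrapT; apply: allA.
Qed.

Lemma small_setU A B : small A -> small B -> small (A `|` B).
Proof.
move=> sA sB /pcard_le_injP[f [fAB finj]].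
have /pcard_le_injP[g [_ ginj]] := card_setX_infinite infinite_setT.
pose phi x y := f (g (x, y)).
have phiAB x y : A (phi x y) \/ B (phi x y) by apply: fAB.
have phi_inj x y x' y' : phi x y = phi x' y' -> x = x' /\ y = y'.
  by move=> /finj => /(_ I I) /ginj => /(_ (conj I I) (conj I I)) /pair_equal_spec.
(* Embed T * T into A `|` B: a row avoiding A embeds T into B; otherwise
   choosing a point of A in each row embeds T into A. *)
have [[x xnA]|/forallNP rowsA] := EM (exists x, forall y, ~ A (phi x y)).
  apply: sB; apply/pcard_le_injP; exists (phi x).
  split=> [y _|y y' _ _ /phi_inj[]//]; by case: (phiAB x y) => // /xnA.
have /choice[h hA] : forall x, exists y, A (phi x y).
  by move=> x; apply: contra_notP (rowsA x) => nA y Ay; apply: nA; exists y.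
apply: sA; apply/pcard_le_injP; exists (fun x => phi x (h x)).
by split=> [x _|x x' _ _ /phi_inj[]//]; exact: hA.
Qed.

Lemma small_image2 (g : T -> T -> T) A B :
  small A -> small B -> small [set g a b | a in A & b in B].
Proof.
move=> sA sB; have /card_subP[N Nnat _] := (infiniteP _).1 infinite_setT.
have Ninf : infinite_set N by rewrite (eq_finite_set Nnat); exact: infinite_nat.
have sN : small N by apply: small_countable; case/card_eqPle: Nnat.
pose S := A `|` B `|` N.
have sS : small S by do 2?apply: small_setU.
have Sinf : infinite_set S by apply: sub_infinite_set Ninf => x; right.
apply: small_card_le sS; rewrite image2E.
apply: card_le_trans (card_image_le _ _) (card_le_trans _ (card_setX_infinite Sinf)).
by apply: subset_card_le => -[a b] [/= Aa Bb]; split; left; [left|right].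
Qed.

End SmallSets.

Section BorelTranslates.
Variable R : realType.
Implicit Types (A : set R) (x y : R).

Let BorelType := g_sigma_algebraType [set U : set R | open U].

Lemma Borel_setC A : Borel A -> Borel (~` A).
Proof. exact: (@measurableC _ BorelType). Qed.

Lemma Borel_bigcup_countable (K : countType) (F : K -> set R) :
  (forall i, Borel (F i)) -> Borel (\bigcup_i F i).
Proof. exact: (@countable_bigcupT_measurable _ BorelType _ _ (countableP _)). Qed.

Lemma Borel_preimage (f : R -> R) A : continuous f -> Borel A -> Borel (f @^-1` A).
Proof.
move=> fcont; move: A.
suff : [set A | Borel A] `<=` [set A | Borel (f @^-1` A)] by move=> sub A /sub.
apply: smallest_sub.
  split=> [|A BA|F BF] /=.
  - by rewrite preimage_set0; exact: sigma_algebra0.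
  - by rewrite setTD -preimage_setC -setTD; exact: sigma_algebraCD.
  - by rewrite preimage_bigcup; exact: sigma_algebra_bigcup.
by move=> U oU; apply: sub_sigma_algebra; apply: open_comp => // x _; exact: fcont.
Qed.

Lemma translateE A x : translate A x = (fun y => y - x) @^-1` A.
Proof.
apply/seteqP; split=> [_ [a Aa <-]|y Ayx]; first by rewrite /= addrK.
by exists (y - x) => //; rewrite subrK.
Qed.

Lemma translate_translate A x y : translate (translate A x) y = translate A (x + y).
Proof.
apply/seteqP; split=> [_ [_ [a Aa <-] <-]|_ [a Aa <-]]; first by exists a; rewrite ?addrA.
by exists (a + x); [exists a|rewrite addrA].
Qed.

Lemma translate0 A : translate A 0 = A.
Proof. by apply/seteqP; split=> [_ [a Aa <-]|a Aa]; [rewrite addr0|exists a; rewrite ?addr0]. Qed.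

Lemma Borel_translate A x : Borel A -> Borel (translate A x).
Proof. by rewrite translateE; apply: Borel_preimage => y; apply: cvgB; [exact: cvg_id|exact: cvg_cst]. Qed.

Definition rat_saturation A := \bigcup_q translate A (ratr q).

Lemma sub_rat_saturation A : A `<=` rat_saturation A.
Proof. by move=> a Aa; exists 0 => //; rewrite rmorph0 translate0. Qed.

Lemma Borel_rat_saturation A : Borel A -> Borel (rat_saturation A).
Proof. by move=> BA; apply: Borel_bigcup_countable => q; exact: Borel_translate. Qed.

Lemma rat_saturationB A q y : rat_saturation A y -> rat_saturation A (y - ratr q).
Proof.
move=> [r _ Ary]; exists (r - q) => //.
by rewrite rmorphB -translate_translate; exists y.
Qed.
End BorelTranslates.

Section SigmaIdeal.
Variables (R : realType) (I : set (set R)).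
Hypotheses (I_set0 : I set0) (I_sub : forall A B, A `<=` B -> I B -> I A)
  (I_bigcup : forall F : nat -> set R, (forall n, I (F n)) -> I (\bigcup_n F n)).

Lemma ideal_bigcup_countable (K : countType) (F : K -> set R) :
  (forall i, I (F i)) -> I (\bigcup_i F i).
Proof.
move=> IF; pose G n := if @unpickle K n is Some i then F i else set0.
apply: (I_sub _ (I_bigcup (F := G) _)) => [x [i _ Fix]|n].
  by exists (pickle i) => //; rewrite /G pickleK.
by rewrite /G; case: unpickle.
Qed.

Lemma ideal_setU A B : I A -> I B -> I (A `|` B).
Proof.
move=> IA IB; have IAB : I (\bigcup_b if b then A else B).
  by apply: ideal_bigcup_countable; case.
by apply: I_sub IAB => x [Ax|Bx]; [exists true|exists false].
Qed.

Lemma ideal_countable A : contains_singletons I -> countable A -> I A.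
Proof.
move=> Isingle /pcard_le_injP[f [_ finj]].
have /choice[g gP] : forall n, exists x, (exists2 y, A y & f y = n) -> A x /\ f x = n.
  move=> n; have [[y Ay fy]|nA] := EM (exists2 y, A y & f y = n).
    by exists y.
  by exists 0.
apply: I_sub (ideal_bigcup_countable (fun n => Isingle (g n))) => x Ax.
have [Agx fgx] := gP (f x) (ex_intro2 _ _ x Ax erefl).
by exists (f x) => //; apply: finj.
Qed.

Hypotheses (I_translate : translation_invariant I) (I_Steinhaus : Steinhaus I).

Lemma ideal_setC_rat_saturation A : Borel A -> ~ I A -> I (~` rat_saturation A).
Proof.
move=> BA nIA; apply: contrapT => nIC.
have BU := Borel_rat_saturation BA.
have nIU : ~ I (rat_saturation A) by move=> /(I_sub (@sub_rat_saturation _ A)).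
have [V [oV V0 VUC]] := I_Steinhaus BU (Borel_setC BU) nIU nIC.
have [_ [/VUC[u Uu [w nUw <-]] [r _ ruw]]] := dense_rat V0 oV.
by apply: nUw; have := rat_saturationB r Uu; rewrite ruw opprB addrC subrK.
Qed.

Lemma ideal_rat_saturation_setI X A :
  ~ I X -> Borel A -> ~ I A -> ~ I (rat_saturation X `&` A).
Proof.
move=> nIX BA nIA.
have [q nIXAq] : exists q, ~ I (X `&` translate A (ratr q)).
  apply: contra_notP nIX => /forallNP IXA.
  have IXA' q : I (X `&` translate A (ratr q)) by apply: contrapT; exact: IXA.
  have := ideal_setU (ideal_setC_rat_saturation BA nIA) (ideal_bigcup_countable IXA').
  apply: I_sub => x Xx; have [[q _ Aqx]|] := EM (rat_saturation A x); last by left.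
  by right; exists q.
move=> /(I_translate (ratr q)); apply: contra_not nIXAq; apply: I_sub.
move=> x [Xx [a Aa ax]]; exists (x - ratr q); last by rewrite subrK.
by split; [exact/rat_saturationB/sub_rat_saturation|rewrite -ax addrK].
Qed.

Lemma completely_nonmeasurable_setC_translate Y t :
  (forall A, Borel A -> ~ I A -> ~ I (Y `&` A)) ->
  (forall y y', Y y -> Y y' -> y - y' <> t) ->
  completely_nonmeasurable I (~` translate Y t).
Proof.
move=> YA Yt A BA nIA; split=> [IAC|IAD].
  apply: (YA A BA nIA); apply: I_sub IAC => y [Yy Ay]; split=> // -[y' Yy' ey].
  by apply: (Yt y y') => //; rewrite -ey addrC addKr.
have nIA' : ~ I (translate A (- t)).
  by move=> /(I_translate t); rewrite translate_translate addNr translate0.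
apply: (YA _ (Borel_translate (- t) BA) nIA'); have := I_translate (- t) IAD.
apply: I_sub => y [Yy [a Aa ay]]; exists (y + t); last by rewrite addrK.
by split; [rewrite -ay subrK|apply; exists y].
Qed.

End SigmaIdeal.

Section UncountableReals.
Variable R : realType.
Hypothesis R_uncountable : ~ countable [set: R].

Lemma lt_c_covering_setC (D : set R) : small D -> lt_c_covering (~` D).
Proof.
move=> sD B [_ sB].
have [x nx] := small_neq_setT (small_image2 R_uncountable (g := fun d b => d - b) sD sB).
exists x => _ [b Bb <-] Dbx; apply: nx.
by exists (b + x) => //; exists b => //; rewrite addrC addKr.
Qed.

Lemma small_rat_saturation (X : set R) : small X -> small (rat_saturation X).
Proof.
move=> sX; have sQ : small (range (@ratr R)).
  exact/small_countable/(card_le_trans (card_image_le _ _) (countableP _)).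
apply: small_card_le (small_image2 R_uncountable (g := fun x y => x + y) sX sQ).
by apply: subset_card_le => _ [q _ [x Xx <-]]; exists x => //; exists (ratr q) => //; exists q.
Qed.

End UncountableReals.

Theorem mainTheorem8 (R : realType) (I : set (set R)) :
  sigma_ideal I -> proper_sigma_ideal I -> translation_invariant I ->
  contains_singletons I -> has_Borel_base I -> Steinhaus I -> non_lt_c I ->
  exists C : set R, lt_c_covering C /\ completely_nonmeasurable I C.
Proof.
move=> [I0 [Isub Ibigcup]] _ Itrans Isingle _ ISteinhaus [X [[_ sX] nIX]].
have Xinf : infinite_set X.
  by move=> /finite_set_countable/(ideal_countable I0 Isub Ibigcup Isingle).
have Runc : ~ countable [set: R].
  by move=> Rcount; apply: sX; apply: card_le_trans Rcount ((infiniteP X).1 Xinf).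
set Y := rat_saturation X; have sY : small Y := small_rat_saturation Runc sX.
have [t nt] := small_neq_setT (small_image2 Runc (g := fun y y' => y - y') sY sY).
exists (~` translate Y t); split.
  exact/(lt_c_covering_setC Runc)/(small_card_le (card_image_le _ _) sY).
apply: completely_nonmeasurable_setC_translate => // [A BA nIA|y y' Yy Yy' yy't].
  exact: ideal_rat_saturation_setI.
by apply: nt; exists y => //; exists y'.
Qed.
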